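(* Assume $\rho_\alpha^{\mathrm{dir}}<1$, let $\theta^\star$ be the unique projected Bellman fixed point, and let $x_k:=\theta_k-\theta^\star$. Fix $\varepsilon>0$ with $\beta_\varepsilon:=\rho_\alpha^{\mathrm{dir}}+\varepsilon<1$, and let $p_\varepsilon$ and $C_\varepsilon$ be as described in the context. Then for every $k\ge0$, \[ \mathbb E[p_\varepsilon(w_k)\mid\mathcal F_k]\le2\sqrt{C_\varepsilon}\,\phi_{\max}\big(R_{\max}+(1+\gamma)\|\Phi\theta^\star\|_\infty\big)+2\sqrt{C_\varepsilon}(1+\gamma)\phi_{\max}^2\,p_\varepsilon(x_k). \]
   Context: Consider a finite discounted MDP with state space $\mathcal S=\{1,\dots,|\mathcal S|\}$, action space $\mathcal A=\{1,\dots,|\mathcal A|\}$, transition probabilities $P(s'\mid s,a)$, real rewards $r(s,a,s')$, expected reward $R(s,a)=\sum_{s'}P(s'\mid s,a)r(s,a,s')$, and discount factor $\gamma\in(0,1)$. Let $R_{\max}:=\max|r(s,a,s')|$. State-action vectors are ordered as $(1,1),(2,1),\dots,(|\mathcal S|,1),(1,2),\dots$. The matrix $P$ has rows $P(\cdot\mid s,a)$, and $R$ has entries $R(s,a)$. The set $\Theta$ is the set of deterministic stationary policies $\pi:\mathcal S\to\mathcal A$. For $\pi\in\Theta$, $\Pi^\pi$ has entry $1$ at row $s$, column $(s,\pi(s))$, and zeros elsewhere. The feature matrix $\Phi$ has full column rank and rows $\phi(s,a)^\top$. Let $\phi_{\max}:=\max\|\phi(s,a)\|_2$, and define $V_\theta(s):=\max_a\phi(s,a)^\top\theta$.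 The distribution $d>0$ on $\mathcal S\times\mathcal A$ gives $D=\mathrm{diag}(d)$. The step size is $\alpha\in(0,1)$. Define $g(\theta):=\Phi^\top D(R+\gamma PV_\theta-\Phi\theta)$; a projected Bellman fixed point is a $\theta^\star$ with $g(\theta^\star)=0$. Define $A_\pi:=I-\alpha\Phi^\top D\Phi+\alpha\gamma\Phi^\top DP\Pi^\pi\Phi$, and let $\rho_\alpha^{\mathrm{dir}}$ be the joint spectral radius $\lim_k\max_{\pi_i\in\Theta}\|A_{\pi_k}\cdots A_{\pi_1}\|^{1/k}$. When $\rho_\alpha^{\mathrm{dir}}<1$, a unique projected Bellman fixed point exists. Lyapunov norm: define \[ V_\varepsilon^\infty(x):=\lim_{t\to\infty}\sum_{\ell=0}^t\beta_\varepsilon^{-2\ell}\max_{\pi_1,\dots,\pi_\ell\in\Theta}\|A_{\pi_\ell}\cdots A_{\pi_1}x\|_2^2, \] where the $\ell=0$ term is $\|x\|_2^2$, and $p_\varepsilon:=\sqrt{V_\varepsilon^\infty}$ (a norm). Let $C_\varepsilon\ge1$ satisfy $\|x\|_2^2\le V^\infty_\varepsilon(x)\le C_\varepsilon\|x\|_2^2$ for all $x$. i.i.d. sampling: $\theta_0$ is deterministic. At each time $k$, $(s_k,a_k)$ is drawn i.i.d. from $d$, $s'_k\sim P(\cdot\mid s_k,a_k)$, and $r_{k+1}=r(s_k,a_k,s'_k)$. The filtration is $\mathcal F_0=\sigma(\theta_0)$ and $\mathcal F_k=\sigma(\theta_0,\{(s_t,a_t,s'_t,r_{t+1}):t\le k-1\})$.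 Define $\widehat g_k(\theta):=\phi(s_k,a_k)(r_{k+1}+\gamma\max_u\phi(s'_k,u)^\top\theta-\phi(s_k,a_k)^\top\theta)$, the update $\theta_{k+1}=\theta_k+\alpha\widehat g_k(\theta_k)$, and $w_k:=\widehat g_k(\theta_k)-g(\theta_k)$. *)

From HB Require Import structures.
From mathcomp Require Import all_boot all_order all_algebra.
From mathcomp Require Import all_classical all_reals all_analysis.
Set Implicit Arguments. Unset Strict Implicit. Unset Printing Implicit Defensive.
Import Order.TTheory GRing.Theory Num.Theory.
Import numFieldNormedType.Exports.
Local Open Scope classical_set_scope.
Local Open Scope ring_scope.

Section Defs.
Context {R : realType}.

Definition vnorm2 n (x : 'cV[R]_n) : R := Num.sqrt (\sum_i (x i ord0) ^+ 2).
Definition dotv n (u v : 'cV[R]_n) : R := \sum_i u i ord0 * v i ord0.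

Definition opnorm n (M : 'M[R]_n) : R :=
  sup [set vnorm2 (M *m x) | x in [set x : 'cV[R]_n | vnorm2 x <= 1]].

(* States S = 'I_nS.+1, actions A = 'I_nA.+1 (finite, nonempty).
   phi s a : feature vector phi(s,a) (row (s,a) of Phi, as a column vector),
   P s a s' = P(s'|s,a), r s a s' = r(s,a,s'), d s a = d(s,a). *)
Variables (nS nA nF : nat).
Local Notation S := 'I_nS.+1.
Local Notation A := 'I_nA.+1.
Local Notation vec := 'cV[R]_nF.

Definition sample := (S * A * S)%type.
Definition policy := {ffun S -> A}.

Section Model.
Variables (P : S -> A -> S -> R) (r : S -> A -> S -> R) (gamma : R)
          (phi : S -> A -> vec) (d : S -> A -> R) (alpha : R).

Definition Qval (th : vec) s a : R := dotv (phi s a) th.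
Definition Vth (th : vec) (s : S) : R := \big[Num.max/Qval th s ord0]_(u : A) Qval th s u.
Definition Rexp s a : R := \sum_(s' : S) P s a s' * r s a s'.

(* g(theta) = Phi^T D (R + gamma P V_theta - Phi theta), written out entrywise
   over state-action pairs (D diagonal). *)
Definition gbar (th : vec) : vec :=
  \sum_(s : S) \sum_(a : A)
     (d s a * (Rexp s a + gamma * (\sum_(s' : S) P s a s' * Vth th s') - Qval th s a))
       *: phi s a.

(* A_pi = I - alpha Phi^T D Phi + alpha gamma Phi^T D P Pi^pi Phi, with
   (P Pi^pi Phi) row (s,a) = sum_s' P(s'|s,a) phi(s',pi(s'))^T. *)
Definition Api (pi : policy) : 'M[R]_nF :=
  1%:M
  - alpha *: (\sum_(s : S) \sum_(a : A) d s a *: (phi s a *m (phi s a)^T))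
  + (alpha * gamma) *: (\sum_(s : S) \sum_(a : A)
        d s a *: (phi s a *m (\sum_(s' : S) P s a s' *: phi s' (pi s'))^T)).

(* A_{pi_l} ... A_{pi_1} for the sequence [:: pi_1; ...; pi_l] *)
Definition prodA (ps : seq policy) : 'M[R]_nF :=
  foldr (fun pi M => M *m Api pi) 1%:M ps.

(* k-th term (k >= 1) of the joint spectral radius sequence:
   max_{pi_1..pi_k} ||A_{pi_k} ... A_{pi_1}||^{1/k}.  Indexed by k.+1. *)
Definition jsr_term (k : nat) : R :=
  \big[Num.max/0]_(ps : k.+1.-tuple policy) (opnorm (prodA ps) `^ (k.+1%:R)^-1).

Definition Vinf (beta : R) (x : vec) : R :=
  limn (fun t : nat => \sum_(0 <= l < t.+1)
     (beta ^- (2 * l) * \big[Num.max/0]_(ps : l.-tuple policy) (vnorm2 (prodA ps *m x)) ^+ 2)).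

Definition peps (beta : R) (x : vec) : R := Num.sqrt (Vinf beta x).

Definition Rmax : R := \big[Num.max/0]_(s : S) \big[Num.max/0]_(a : A)
                         \big[Num.max/0]_(s' : S) `|r s a s'|.
Definition phimax : R := \big[Num.max/0]_(s : S) \big[Num.max/0]_(a : A) vnorm2 (phi s a).
Definition Phi_infnorm (th : vec) : R :=
  \big[Num.max/0]_(s : S) \big[Num.max/0]_(a : A) `|Qval th s a|.

Definition ghat (smp : sample) (th : vec) : vec :=
  let: (s, a, s') := smp in
  (r s a s' + gamma * Vth th s' - Qval th s a) *: phi s a.

Definition step (th : vec) (smp : sample) : vec := th + alpha *: ghat smp th.
(* theta_k as a function of theta_0 and the first k samples *)
Definition traj (th0 : vec) (h : seq sample) : vec := foldl step th0 h.

(* probability of one sample (s_k,a_k,s'_k): d(s,a) P(s'|s,a); of a history: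
   product (i.i.d.). *)
Definition mu (smp : sample) : R := let: (s, a, s') := smp in d s a * P s a s'.
Definition prob (h : seq sample) : R := \prod_(x <- h) mu x.

(* Conditional expectation E[X | F_k] for a random variable X depending on the
   first k+1 samples, evaluated at the atom of F_k given by the first k samples h
   (F_k is generated by the finite partition into such atoms; theta_0 is
   deterministic and r_{t+1} is a function of (s_t,a_t,s'_t)). *)
Definition cond_exp (k : nat) (X : k.+1.-tuple sample -> R) (h : k.-tuple sample) : R :=
  (\sum_(om : k.+1.-tuple sample | take k om == val h) prob om * X om) / prob h.

Definition wk (th0 : vec) (k : nat) (om : k.+1.-tuple sample) : vec :=
  let thk := traj th0 (take k om) in ghat (tnth om ord_max) thk - gbar thk.

End Model.
End Defs.

(* Both the sampled update ghat_k and its mean g are (averages of) temporal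
   difference errors times feature vectors, so each has Euclidean norm at most
   phimax (Rmax + (1 + gamma) ||Phi theta_k||_oo), and by Cauchy-Schwarz
   ||Phi theta_k||_oo <= ||Phi thstar||_oo + phimax ||theta_k - thstar||.
   Squeezing the Lyapunov norm between ||.|| and sqrt C ||.|| turns this into a
   bound on p_eps(w_k) valid on every sample path extending the current history,
   and a conditional expectation is bounded by any such pathwise bound. *)

From HB Require Import structures.
From mathcomp Require Import all_boot all_order all_algebra.
From mathcomp Require Import all_classical all_reals all_analysis.
From mathcomp Require Import ring lra.
Import Order.TTheory GRing.Theory Num.Theory.
Import numFieldNormedType.Exports.
Local Open Scope classical_set_scope.
Local Open Scope ring_scope.

Section EuclideanNorm.
Context {R : realType} {n : nat}.
Implicit Types (u v : 'cV[R]_n).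

Lemma vnorm2_ge0 u : 0 <= vnorm2 u.
Proof. exact: sqrtr_ge0. Qed.

Lemma sqr_vnorm2 u : vnorm2 u ^+ 2 = \sum_i u i ord0 ^+ 2.
Proof. by rewrite sqr_sqrtr // sumr_ge0 // => i _; rewrite sqr_ge0. Qed.

Lemma vnorm20 : vnorm2 (0 : 'cV[R]_n) = 0.
Proof. by rewrite /vnorm2 big1 ?sqrtr0 // => i _; rewrite mxE expr0n. Qed.

Lemma vnorm2Z c u : vnorm2 (c *: u) = `|c| * vnorm2 u.
Proof.
rewrite /vnorm2 -sqrtr_sqr -sqrtrM ?sqr_ge0 // mulr_sumr.
by congr Num.sqrt; apply: eq_bigr => i _; rewrite mxE exprMn.
Qed.

Lemma vnorm2N u : vnorm2 (- u) = vnorm2 u.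
Proof. by rewrite -scaleN1r vnorm2Z normrN1 mul1r. Qed.

Lemma sqr_dotv_le u v : dotv u v ^+ 2 <= vnorm2 u ^+ 2 * vnorm2 v ^+ 2.
Proof.
set a := fun i => u i ord0; set b := fun i => v i ord0.
have dot2E : dotv u v ^+ 2 = \sum_i \sum_j a i * b i * (a j * b j).
  by rewrite expr2 /dotv mulr_suml; apply: eq_bigr => i _; rewrite mulr_sumr.
have norm2E : vnorm2 u ^+ 2 * vnorm2 v ^+ 2 = \sum_i \sum_j a i ^+ 2 * b j ^+ 2.
  by rewrite !sqr_vnorm2 mulr_suml; apply: eq_bigr => i _; rewrite mulr_sumr.
have norm2E' : vnorm2 u ^+ 2 * vnorm2 v ^+ 2 = \sum_i \sum_j a j ^+ 2 * b i ^+ 2.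
  by rewrite norm2E exchange_big.
have : \sum_i \sum_j 2 * (a i * b i * (a j * b j))
    <= \sum_i \sum_j (a i ^+ 2 * b j ^+ 2 + a j ^+ 2 * b i ^+ 2).
  apply: ler_sum => i _; apply: ler_sum => j _.
  have := sqr_ge0 (a i * b j - a j * b i); nra.
have -> : \sum_i \sum_j 2 * (a i * b i * (a j * b j)) = 2 * dotv u v ^+ 2.
  by rewrite dot2E mulr_sumr; apply: eq_bigr => i _; rewrite mulr_sumr.
have -> : \sum_i \sum_j (a i ^+ 2 * b j ^+ 2 + a j ^+ 2 * b i ^+ 2)
    = 2 * (vnorm2 u ^+ 2 * vnorm2 v ^+ 2).
  rewrite -[2]/(1 + 1) mulrDl mul1r {1}norm2E norm2E' -big_split.
  by apply: eq_bigr => i _; rewrite big_split.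
lra.
Qed.

Lemma normr_dotv_le u v : `|dotv u v| <= vnorm2 u * vnorm2 v.
Proof.
rewrite -sqrtr_sqr -(ger0_norm (mulr_ge0 (vnorm2_ge0 u) (vnorm2_ge0 v))) -sqrtr_sqr.
by apply: ler_wsqrtr; rewrite exprMn sqr_dotv_le.
Qed.

Lemma vnorm2D u v : vnorm2 (u + v) <= vnorm2 u + vnorm2 v.
Proof.
rewrite -ler_sqr ?nnegrE ?addr_ge0 ?vnorm2_ge0 //.
have -> : vnorm2 (u + v) ^+ 2 = vnorm2 u ^+ 2 + 2 * dotv u v + vnorm2 v ^+ 2.
  rewrite !sqr_vnorm2 /dotv mulr_sumr -!big_split /=.
  by apply: eq_bigr => i _; rewrite mxE; ring.
have := le_trans (ler_norm _) (normr_dotv_le u v); nra.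
Qed.

Lemma vnorm2B u v : vnorm2 (u - v) <= vnorm2 u + vnorm2 v.
Proof. by rewrite -(vnorm2N v) vnorm2D. Qed.

Lemma vnorm2_sum (I : Type) (s : seq I) (F : I -> 'cV[R]_n) :
  vnorm2 (\sum_(i <- s) F i) <= \sum_(i <- s) vnorm2 (F i).
Proof.
elim/big_rec2: _ => [|i x y _ IH]; first by rewrite vnorm20.
by apply: le_trans (vnorm2D _ _) _; rewrite lerD2l.
Qed.

Lemma vnorm2_convex_le (I : finType) (w : I -> R) (F : I -> 'cV[R]_n) M :
  (forall i, 0 <= w i) -> \sum_i w i = 1 -> (forall i, vnorm2 (F i) <= M) ->
  vnorm2 (\sum_i w i *: F i) <= M.
Proof.
move=> w_ge0 w_sum1 FM; apply: le_trans (vnorm2_sum _ _ _) _.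
rewrite -[M]mul1r -w_sum1 mulr_suml; apply: ler_sum => i _.
by rewrite vnorm2Z ger0_norm // ler_wpM2l.
Qed.

End EuclideanNorm.

Lemma normr_convex_le (R : numDomainType) (I : finType) (w f : I -> R) M :
  (forall i, 0 <= w i) -> \sum_i w i = 1 -> (forall i, `|f i| <= M) ->
  `|\sum_i w i * f i| <= M.
Proof.
move=> w_ge0 w_sum1 fM; apply: le_trans (ler_norm_sum _ _ _) _.
rewrite -[M]mul1r -w_sum1 mulr_suml; apply: ler_sum => i _.
by rewrite normrM ger0_norm // ler_wpM2l.
Qed.

Lemma sqrtr_sandwich (R : rcfType) (C a v : R) :
  0 <= C -> 0 <= a -> a ^+ 2 <= v <= C * a ^+ 2 ->
  a <= Num.sqrt v <= Num.sqrt C * a.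
Proof.
move=> C_ge0 a_ge0 /andP[lo hi]; apply/andP; split.
  by rewrite -[a]ger0_norm // -sqrtr_sqr ler_wsqrtr.
by rewrite -[a in _ * a]ger0_norm // -sqrtr_sqr -sqrtrM // ler_wsqrtr.
Qed.

Section Bounds.
Context {R : realType} {nS nA nF : nat}.
Variables (P r : 'I_nS.+1 -> 'I_nA.+1 -> 'I_nS.+1 -> R) (gamma : R)
  (phi : 'I_nS.+1 -> 'I_nA.+1 -> 'cV[R]_nF) (d : 'I_nS.+1 -> 'I_nA.+1 -> R).
Hypothesis P_ge0 : forall s a s', 0 <= P s a s'.
Hypothesis P_sum1 : forall s a, \sum_s' P s a s' = 1.
Hypothesis gamma_ge0 : 0 <= gamma.
Hypothesis d_ge0 : forall s a, 0 <= d s a.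
Hypothesis d_sum1 : \sum_s \sum_a d s a = 1.

Lemma phimax_ge0 : 0 <= phimax phi.
Proof. exact: bigmax_ge_id. Qed.

Lemma Phi_infnorm_ge0 th : 0 <= Phi_infnorm phi th.
Proof. exact: bigmax_ge_id. Qed.

Lemma normr_Qval_le th s a : `|Qval phi th s a| <= Phi_infnorm phi th.
Proof. by apply: (bigmax_sup s) => //; apply: (bigmax_sup a). Qed.

Lemma vnorm2_phi_le s a : vnorm2 (phi s a) <= phimax phi.
Proof. by apply: (bigmax_sup s) => //; apply: (bigmax_sup a). Qed.

Lemma normr_r_le s a s' : `|r s a s'| <= Rmax r.
Proof.
by apply: (bigmax_sup s) => //; apply: (bigmax_sup a) => //; apply: (bigmax_sup s').
Qed.

Lemma normr_Vth_le th s : `|Vth phi th s| <= Phi_infnorm phi th.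
Proof.
rewrite ler_norml; apply/andP; split.
  apply: le_trans (bigmax_ge_id _ _ _ _).
  by have := normr_Qval_le th s ord0; rewrite ler_norml => /andP[].
apply: bigmax_le => [|u _]; exact: le_trans (ler_norm _) (normr_Qval_le _ _ _).
Qed.

Lemma normr_Rexp_le s a : `|Rexp P r s a| <= Rmax r.
Proof. exact: normr_convex_le (normr_r_le s a). Qed.

Lemma normr_expected_Vth_le th s a :
  `|\sum_s' P s a s' * Vth phi th s'| <= Phi_infnorm phi th.
Proof. exact: normr_convex_le (normr_Vth_le th). Qed.

Lemma Phi_infnorm_lipschitz th th' :
  Phi_infnorm phi th <= Phi_infnorm phi th' + phimax phi * vnorm2 (th - th').
Proof.
have bound_ge0 : 0 <= Phi_infnorm phi th' + phimax phi * vnorm2 (th - th').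
  by rewrite addr_ge0 ?Phi_infnorm_ge0 ?mulr_ge0 ?phimax_ge0 ?vnorm2_ge0.
apply: bigmax_le => // s _; apply: bigmax_le => // a _.
have -> : Qval phi th s a = Qval phi th' s a + dotv (phi s a) (th - th').
  by rewrite /Qval /dotv -big_split; apply: eq_bigr => i _; rewrite /= !mxE; ring.
apply: le_trans (ler_normD _ _) (lerD (normr_Qval_le _ _ _) _).
apply: le_trans (normr_dotv_le _ _) _.
by rewrite ler_wpM2r ?vnorm2_ge0 ?vnorm2_phi_le.
Qed.

Definition update_bound th := phimax phi * (Rmax r + (1 + gamma) * Phi_infnorm phi th).

Lemma vnorm2_td_update_le th s a x v :
  `|x| <= Rmax r -> `|v| <= Phi_infnorm phi th ->
  vnorm2 ((x + gamma * v - Qval phi th s a) *: phi s a) <= update_bound th.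
Proof.
move=> x_le v_le; rewrite vnorm2Z /update_bound mulrC.
rewrite ler_pM ?normr_ge0 ?vnorm2_ge0 ?vnorm2_phi_le //.
have := normr_Qval_le th s a.
have := ler_wpM2l gamma_ge0 v_le.
have := ler_normB (x + gamma * v) (Qval phi th s a).
have := ler_normD x (gamma * v); rewrite normrM ger0_norm //; lra.
Qed.

Lemma vnorm2_ghat_le smp th : vnorm2 (ghat r gamma phi smp th) <= update_bound th.
Proof.
case: smp => [[s a] s'].
by apply: vnorm2_td_update_le; [exact: normr_r_le | exact: normr_Vth_le].
Qed.

Lemma vnorm2_gbar_le th : vnorm2 (gbar P r gamma phi d th) <= update_bound th.
Proof.
rewrite /gbar pair_bigA /=; under eq_bigr do rewrite -scalerA.
apply: vnorm2_convex_le => [[s a]||[s a]] /=.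
- exact: d_ge0.
- by rewrite -d_sum1 pair_bigA.
- by apply: vnorm2_td_update_le; [exact: normr_Rexp_le | exact: normr_expected_Vth_le].
Qed.

Lemma update_bound_lipschitz th th' :
  update_bound th <= update_bound th' + (1 + gamma) * phimax phi ^+ 2 * vnorm2 (th - th').
Proof.
have c_ge0 : 0 <= phimax phi * (1 + gamma) by rewrite mulr_ge0 ?phimax_ge0 ?addr_ge0.
have := ler_wpM2l c_ge0 (Phi_infnorm_lipschitz th th').
rewrite /update_bound; lra.
Qed.

Lemma vnorm2_noise_le smp th th' :
  vnorm2 (ghat r gamma phi smp th - gbar P r gamma phi d th)
  <= 2 * update_bound th' + 2 * (1 + gamma) * phimax phi ^+ 2 * vnorm2 (th - th').
Proof.
apply: le_trans (vnorm2B _ _) _.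
have := vnorm2_ghat_le smp th; have := vnorm2_gbar_le th.
have := update_bound_lipschitz th th'; lra.
Qed.

End Bounds.

Lemma eq_rcons_tuple (T : eqType) k (h : k.-tuple T) x (om : k.+1.-tuple T) :
  (take k om == h) && (tnth om ord_max == x) = (om == rcons_tuple h x).
Proof.
apply/andP/eqP => [[/eqP om_h /eqP om_x] | ->]; last first.
  split; first by rewrite /= -cats1 take_size_cat ?size_tuple.
  by rewrite (tnth_nth x) /= nth_rcons size_tuple ltnn eqxx.
apply: val_inj; rewrite /= -om_h -om_x (tnth_nth x) -take_nth ?size_tuple //.
by rewrite take_oversize ?size_tuple.
Qed.

Section ConditionalExpectation.
Context {R : realType} {nS nA : nat}.
Variables (P : 'I_nS.+1 -> 'I_nA.+1 -> 'I_nS.+1 -> R) (d : 'I_nS.+1 -> 'I_nA.+1 -> R).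
Hypothesis P_ge0 : forall s a s', 0 <= P s a s'.
Hypothesis P_sum1 : forall s a, \sum_s' P s a s' = 1.
Hypothesis d_ge0 : forall s a, 0 <= d s a.
Hypothesis d_sum1 : \sum_s \sum_a d s a = 1.

Lemma prob_ge0 h : 0 <= prob P d h.
Proof. by apply: prodr_ge0 => -[[s a] s'] _; rewrite mulr_ge0. Qed.

Lemma sum_mu : \sum_x mu P d x = 1.
Proof.
rewrite -d_sum1 pair_bigA (eq_bigr (fun x => mu P d (x.1, x.2))) => [|[] //].
rewrite -(pair_bigA _ (fun p s' => mu P d (p, s'))).
by apply: eq_bigr => -[s a] _; rewrite -mulr_sumr P_sum1 mulr1.
Qed.

Lemma sum_prob_take k (h : k.-tuple (sample nS nA)) :
  \sum_(om : k.+1.-tuple (sample nS nA) | take k om == h) prob P d om = prob P d h.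
Proof.
rewrite (partition_big (fun om => tnth om ord_max) predT) //=.
under eq_bigr => x _.
  rewrite (big_pred1 (rcons_tuple h x)); last exact: eq_rcons_tuple.
  rewrite /prob big_rcons /=.
  over.
by rewrite -mulr_sumr sum_mu mulr1.
Qed.

Lemma cond_exp_le k (X : k.+1.-tuple (sample nS nA) -> R)
    (h : k.-tuple (sample nS nA)) (M : R) :
  0 < prob P d h -> (forall om : k.+1.-tuple _, take k om = h -> X om <= M) ->
  cond_exp P d X h <= M.
Proof.
move=> h_gt0 XM; rewrite /cond_exp ler_pdivrMr // -sum_prob_take mulr_sumr.
by apply: ler_sum => om /eqP om_h; rewrite mulrC ler_wpM2r ?prob_ge0 ?XM.
Qed.

End ConditionalExpectation.

Theorem lemma5 (R : realType) (nS nA nF : nat)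
  (P : 'I_nS.+1 -> 'I_nA.+1 -> 'I_nS.+1 -> R)
  (r : 'I_nS.+1 -> 'I_nA.+1 -> 'I_nS.+1 -> R) (gamma : R)
  (phi : 'I_nS.+1 -> 'I_nA.+1 -> 'cV[R]_nF) (d : 'I_nS.+1 -> 'I_nA.+1 -> R)
  (alpha : R) (theta0 thstar : 'cV[R]_nF) (rho eps C : R) :
  (forall s a s', 0 <= P s a s') ->
  (forall s a, \sum_(s' : 'I_nS.+1) P s a s' = 1) ->
  0 < gamma < 1 ->
  (* Phi has full column rank: Phi theta = 0 -> theta = 0 *)
  (forall th : 'cV[R]_nF, (forall s a, Qval phi th s a = 0) -> th = 0) ->
  (forall s a, 0 < d s a) ->
  \sum_(s : 'I_nS.+1) \sum_(a : 'I_nA.+1) d s a = 1 ->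
  0 < alpha < 1 ->
  (* rho = rho_alpha^dir, the joint spectral radius, and rho < 1 *)
  jsr_term P gamma phi d alpha @ \oo --> rho ->
  rho < 1 ->
  (* thstar is the projected Bellman fixed point *)
  gbar P r gamma phi d thstar = 0 ->
  0 < eps -> rho + eps < 1 ->
  1 <= C ->
  (forall x : 'cV[R]_nF,
      vnorm2 x ^+ 2 <= Vinf P gamma phi d alpha (rho + eps) x <= C * vnorm2 x ^+ 2) ->
  forall (k : nat) (h : k.-tuple (sample nS nA)),
    0 < prob P d h ->
    cond_exp P d
      (fun om => peps P gamma phi d alpha (rho + eps) (wk P r gamma phi d alpha theta0 om)) h
    <= 2 * Num.sqrt C * phimax phi
          * (Rmax r + (1 + gamma) * Phi_infnorm phi thstar)
       + 2 * Num.sqrt C * (1 + gamma) * phimax phi ^+ 2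
          * peps P gamma phi d alpha (rho + eps) (traj r gamma phi alpha theta0 h - thstar).
Proof.
move=> P_ge0 P_sum1 /andP[gamma_gt0 _] _ d_gt0 d_sum1 _ _ _ _ _ _ C_ge1 V_equiv k h h_gt0.
have gamma_ge0 := ltW gamma_gt0.
have d_ge0 s a : 0 <= d s a := ltW (d_gt0 s a).
set p := peps P gamma phi d alpha (rho + eps).
have p_equiv x : vnorm2 x <= p x <= Num.sqrt C * vnorm2 x.
  exact: sqrtr_sandwich (le_trans ler01 C_ge1) (vnorm2_ge0 x) (V_equiv x).
apply: cond_exp_le => // om om_h; rewrite /wk om_h.
set th := traj r gamma phi alpha theta0 h.
set w := ghat r gamma phi (tnth om ord_max) th - gbar P r gamma phi d th.
have /andP[_ p_w] := p_equiv w.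
have /andP[p_x _] := p_equiv (th - thstar).
have noise : vnorm2 w <= 2 * update_bound r gamma phi thstar
    + 2 * (1 + gamma) * phimax phi ^+ 2 * vnorm2 (th - thstar).
  exact: vnorm2_noise_le.
have c_ge0 : 0 <= Num.sqrt C * ((1 + gamma) * phimax phi ^+ 2).
  by rewrite mulr_ge0 ?sqrtr_ge0 // mulr_ge0 ?sqr_ge0 // addr_ge0.
have := ler_wpM2l (sqrtr_ge0 C) noise; have := ler_wpM2l c_ge0 p_x.
rewrite /update_bound; lra.
Qed.
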